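(* In the network revenue management problem described in the context, the Frequent Re-solving policy satisfies $v^{\mathrm{DLP}}-v^{\mathrm{FR}}=O(\sqrt{T})$: there exist constants $M$ and $T_1$ depending only on $\lambda_1,\dots,\lambda_n$, $r_1,\dots,r_n$ and $A$ (not on the capacities $C_1,\dots,C_m$) such that $v^{\mathrm{DLP}}-v^{\mathrm{FR}}\le M\sqrt{T}$ for all $T\ge T_1$.
   Context: NRM problem: horizon $[0,T]$, $T$ a positive integer; $n$ classes with independent Poisson arrivals $\Lambda_j(t)$ of rates $\lambda_j>0$; $m$ resources with initial capacities $C=(C_1,\dots,C_m)^\top$; accepting a class-$j$ customer earns $r_j\ge0$ and consumes $A_j=(a_{1j},\dots,a_{mj})^\top$, $a_{lj}\ge0$, $A=(a_{lj})$. Customers are irrevocably accepted or rejected upon arrival and can only be accepted if $A_j$ is componentwise at most the remaining capacity. Deterministic LP value: $v^{\mathrm{DLP}}=\max\{T\sum_jr_jx_j:\sum_jA_jx_j\le C/T,\ 0\le x_j\le\lambda_j\}$. Frequent Re-solving (FR) policy: for each $t=0,1,\dots,T-1$, with remaining capacity $C(t)$ and $b(t)=C(t)/(T-t)$, compute an optimal solution $x(t)$ of $\max\{\sum_jr_jx_j:\sum_jA_jx_j\le b(t),\ 0\le x_j\le\lambda_j\}$; during $[t,t+1)$ each arriving class-$j$ customer is accepted independently with probability $x_j(t)/\lambda_j$ if capacity suffices, and rejected otherwise. $v^{\mathrm{FR}}$ is its expected revenue. *)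

From Stdlib Require Import Reals Lra Lia.
From Coquelicot Require Import Coquelicot.
Open Scope R_scope.

(* Conventions: classes are indexed by j < n, resources by l < m.
   lam j = lambda_j, r j = r_j, a l j = a_{lj}; a vector in R^k is a
   function nat -> R of which only the first k coordinates matter. *)

Fixpoint fsum (n : nat) (f : nat -> R) : R :=
  match n with
  | O => 0
  | S k => fsum k f + f k
  end.

Definition lp_feas (n m : nat) (lam : nat -> R) (a : nat -> nat -> R)
  (b : nat -> R) (x : nat -> R) : Prop :=
  (forall j, (j < n)%nat -> 0 <= x j <= lam j) /\
  (forall l, (l < m)%nat -> fsum n (fun j => a l j * x j) <= b l).

Definition lp_opt (n m : nat) (lam r : nat -> R) (a : nat -> nat -> R)
  (b : nat -> R) (x : nat -> R) : Prop :=
  lp_feas n m lam a b x /\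
  forall y, lp_feas n m lam a b y ->
    fsum n (fun j => r j * y j) <= fsum n (fun j => r j * x j).

Fixpoint fitsb (m : nat) (a : nat -> nat -> R) (j : nat) (c : nat -> R) : bool :=
  match m with
  | O => true
  | S m' => fitsb m' a j c && (if Rle_dec (a m' j) (c m') then true else false)
  end.

Definition consume (a : nat -> nat -> R) (j : nat) (c : nat -> R) : nat -> R :=
  fun l => c l - a l j.

Definition poisson_pmf (mu : R) (k : nat) : R :=
  exp (- mu) * mu ^ k / INR (Factorial.fact k).

(* Within a unit period [t,t+1) the FR policy uses a fixed x.  The superposition
   of the class arrival processes is Poisson with rate Lam = sum_j lam_j, and
   each arrival is independently of class j with probability lam_j / Lam.
   period_rev k x cont c = expected revenue collected from the next k arrivals of
   the period, starting with remaining capacity c, plus the expected value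
   cont c' of the capacity c' left after them (continuation value). *)
Fixpoint period_rev (n m : nat) (lam r : nat -> R) (a : nat -> nat -> R)
  (k : nat) (x : nat -> R) (cont : (nat -> R) -> R) (c : nat -> R) : R :=
  match k with
  | O => cont c
  | S k' =>
      fsum n (fun j =>
        lam j / fsum n lam *
        (if fitsb m a j c then
           x j / lam j * (r j + period_rev n m lam r a k' x cont (consume a j c))
           + (1 - x j / lam j) * period_rev n m lam r a k' x cont c
         else period_rev n m lam r a k' x cont c))
  end.

(* FR_rem T sel s c = expected revenue of the FR policy over [T-s, T] when the
   remaining capacity at time T-s is c.  sel t c is the optimal LP solution x(t)
   chosen at time t when the remaining capacity is c. *)
Fixpoint FR_rem (n m : nat) (lam r : nat -> R) (a : nat -> nat -> R)
  (T : nat) (sel : nat -> (nat -> R) -> (nat -> R)) (s : nat) (c : nat -> R)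
  {struct s} : R :=
  match s with
  | O => 0
  | S s' =>
      Series (fun k =>
        poisson_pmf (fsum n lam) k *
        period_rev n m lam r a k (sel (T - S s')%nat c)
          (FR_rem n m lam r a T sel s') c)
  end.

Definition v_FR (n m : nat) (lam r : nat -> R) (a : nat -> nat -> R)
  (T : nat) (sel : nat -> (nat -> R) -> (nat -> R)) (C : nat -> R) : R :=
  FR_rem n m lam r a T sel T C.

Definition FR_selection (n m : nat) (lam r : nat -> R) (a : nat -> nat -> R)
  (T : nat) (sel : nat -> (nat -> R) -> (nat -> R)) : Prop :=
  forall (t : nat) (c : nat -> R), (t < T)%nat ->
    (forall l, (l < m)%nat -> 0 <= c l) ->
    lp_opt n m lam r a (fun l => c l / INR (T - t)) (sel t c).

(* Let V_s(c) be the FR revenue with s periods to go from capacity c, and R* = sum_j r_j x*_j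
   the DLP rate for b = C/T.  By induction on s,
     s R* - V_s(c) <= 2 g sqrt s + sum_l M_l sqrt ((s b_l - c_l)_+^2 + beta_l s),
   and the right-hand side equals M sqrt T at s = T, c = C.  In a period with S periods to go,
   the re-solved LP (right-hand side c/S) earns at least R* - sum_l K_l (S b_l - c_l)_+ / S
   by LP sensitivity.  Blocking within the period costs O(1/S): a class whose demand is large
   compared to c has x_j = O(1/S), and the other classes are blocked only after a depletion of
   order c, which a linear minorant of the immediate reward accounts for.  The square roots are
   concave, so their expectation after the period is bounded by a tangent line, and the expected
   shrinking of the shortfall (S b_l - c_l)_+ by the factor 1 - 1/S repays the LP loss.  The
   Poisson number of arrivals enters only through E[k] and E[k(k-1)]. *)

From Stdlib Require Import Reals Lra Lia Bool Classical_Prop.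
From Coquelicot Require Import Coquelicot.
Open Scope R_scope.

Lemma fsum_ext n f g : (forall j, (j < n)%nat -> f j = g j) -> fsum n f = fsum n g.
Proof.
  induction n as [|n IH]; intros H; simpl; auto.
  rewrite IH by (intros; apply H; lia). rewrite H by lia. reflexivity.
Qed.

Lemma fsum_add n f g : fsum n (fun j => f j + g j) = fsum n f + fsum n g.
Proof. induction n as [|n IH]; simpl; [ring|]. rewrite IH; ring. Qed.

Lemma fsum_sub n f g : fsum n (fun j => f j - g j) = fsum n f - fsum n g.
Proof. induction n as [|n IH]; simpl; [ring|]. rewrite IH; ring. Qed.

Lemma fsum_scal n c f : fsum n (fun j => c * f j) = c * fsum n f.
Proof. induction n as [|n IH]; simpl; [ring|]. rewrite IH; ring. Qed.

Lemma fsum_const n c : fsum n (fun _ => c) = INR n * c.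
Proof. induction n as [|n IH]; simpl fsum; [simpl; ring|]. rewrite IH, S_INR; ring. Qed.

Lemma fsum_id n : fsum n INR = INR n * (INR n - 1) / 2.
Proof. induction n as [|n IH]; simpl fsum; [simpl; field|]. rewrite IH, S_INR; field. Qed.

Lemma fsum_shift n f : fsum (S n) f = f O + fsum n (fun i => f (S i)).
Proof. induction n as [|n IH]; simpl in *; [ring|]. rewrite IH; ring. Qed.

Lemma fsum_swap n m (f : nat -> nat -> R) :
  fsum n (fun j => fsum m (fun l => f j l)) = fsum m (fun l => fsum n (fun j => f j l)).
Proof.
  induction n as [|n IH]; simpl.
  - rewrite fsum_const; simpl; ring.
  - rewrite IH, <- fsum_add; reflexivity.
Qed.

Lemma fsum_le n f g : (forall j, (j < n)%nat -> f j <= g j) -> fsum n f <= fsum n g.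
Proof.
  induction n as [|n IH]; intros H; simpl; [lra|].
  apply Rplus_le_compat; [apply IH; intros; apply H|apply H]; lia.
Qed.

Lemma fsum_nonneg n f : (forall j, (j < n)%nat -> 0 <= f j) -> 0 <= fsum n f.
Proof.
  intros H. replace 0 with (fsum n (fun _ => 0)) by (rewrite fsum_const; ring).
  apply fsum_le, H.
Qed.

Lemma fsum_ge_term n f j :
  (forall i, (i < n)%nat -> 0 <= f i) -> (j < n)%nat -> f j <= fsum n f.
Proof.
  induction n as [|n IH]; intros H Hj; simpl; [lia|].
  destruct (Nat.eq_dec j n) as [->|Hne].
  - assert (0 <= fsum n f) by (apply fsum_nonneg; intros; apply H; lia). lra.
  - assert (f j <= fsum n f) by (apply IH; [intros; apply H|]; lia).
    assert (0 <= f n) by (apply H; lia). lra.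
Qed.

Lemma fitsb_le m a j c :
  fitsb m a j c = true -> forall l, (l < m)%nat -> a l j <= c l.
Proof.
  induction m as [|m IH]; simpl; intros H l Hl; [lia|].
  apply andb_prop in H as [H1 H2].
  destruct (Nat.eq_dec l m) as [->|Hne].
  - destruct (Rle_dec (a m j) (c m)); [assumption|discriminate].
  - apply IH; auto; lia.
Qed.

Lemma fitsb_false m a j c :
  fitsb m a j c = false -> exists l, (l < m)%nat /\ c l < a l j.
Proof.
  induction m as [|m IH]; simpl; intros H; [discriminate|].
  apply andb_false_iff in H as [H|H].
  - destruct (IH H) as [l [Hl Hc]]. exists l; split; [lia|assumption].
  - exists m; split; [lia|]. destruct (Rle_dec (a m j) (c m)); [discriminate|lra].
Qed.

Lemma is_series_le_compat (u v : nat -> R) lu lv :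
  is_series u lu -> is_series v lv -> (forall k, u k <= v k) -> lu <= lv.
Proof.
  intros Hu Hv H. apply (is_lim_seq_le (sum_n u) (sum_n v) lu lv); auto.
  intros k. induction k as [|k IH]; [rewrite !sum_O; apply H|].
  rewrite !sum_Sn. unfold plus; simpl. specialize (H (S k)). lra.
Qed.

Lemma Series_ge_is_series (u v : nat -> R) l :
  ex_series v -> is_series u l -> (forall k, u k <= v k) -> l <= Series v.
Proof. intros Hv Hu H. apply (is_series_le_compat u v); auto. apply Series_correct, Hv. Qed.

Lemma Series_le_is_series (u v : nat -> R) l :
  ex_series u -> is_series v l -> (forall k, u k <= v k) -> Series u <= l.
Proof. intros Hu Hv H. apply (is_series_le_compat u v); auto. apply Series_correct, Hu. Qed.

Lemma poisson_pmf_nonneg mu k : 0 <= mu -> 0 <= poisson_pmf mu k.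
Proof.
  intros H. unfold poisson_pmf. apply Rle_mult_inv_pos; [|apply INR_fact_lt_0].
  apply Rmult_le_pos; [apply Rlt_le, exp_pos|apply pow_le, H].
Qed.

Lemma poisson_pmf_S mu k : poisson_pmf mu (S k) * INR (S k) = mu * poisson_pmf mu k.
Proof.
  unfold poisson_pmf. rewrite (fact_simpl k), mult_INR. simpl pow.
  field. split; [apply INR_fact_neq_0|]. rewrite S_INR. pose proof (pos_INR k). lra.
Qed.

Lemma poisson_total mu : is_series (poisson_pmf mu) 1.
Proof.
  assert (H : is_series (fun k => / INR (Factorial.fact k) * mu ^ k) (exp mu)).
  { apply is_series_Reals. unfold exp. destruct (exist_exp mu) as [l Hl]. exact Hl. }
  apply (is_series_scal (exp (- mu))) in H.
  replace 1 with (scal (exp (- mu)) (exp mu))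
    by (unfold scal; simpl; unfold mult; simpl; rewrite <- exp_plus, Rplus_opp_l; apply exp_0).
  eapply is_series_ext; [|exact H]. intros k.
  unfold poisson_pmf, scal; simpl; unfold mult; simpl. field. apply INR_fact_neq_0.
Qed.

Lemma poisson_mean mu : is_series (fun k => poisson_pmf mu k * INR k) mu.
Proof.
  apply is_series_decr_1.
  match goal with |- is_series _ ?l => replace l with (scal mu 1)
    by (unfold plus, opp, scal; simpl; unfold mult; simpl; ring) end.
  eapply is_series_ext; [|apply (is_series_scal mu _ _ (poisson_total mu))].
  intros k. symmetry. apply poisson_pmf_S.
Qed.

Lemma poisson_factorial_moment2 mu :
  is_series (fun k => poisson_pmf mu k * (INR k * (INR k - 1))) (mu * mu).
Proof.
  apply is_series_decr_1.
  match goal with |- is_series _ ?l => replace l with (scal mu mu)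
    by (unfold plus, opp, scal; simpl; unfold mult; simpl; ring) end.
  eapply is_series_ext; [|apply (is_series_scal mu _ _ (poisson_mean mu))].
  intros k. replace (INR (S k) - 1) with (INR k) by (rewrite S_INR; ring).
  rewrite <- (Rmult_assoc (poisson_pmf mu (S k))), poisson_pmf_S.
  unfold scal; simpl; unfold mult; simpl. ring.
Qed.

(* A quadratic in k written in the basis 1, k, k(k-1), where Poisson moments are
   simplest: E[k(k-1)] = mu^2. *)
Definition quad (c0 c1 c2 : R) (k : nat) : R :=
  c0 + c1 * INR k + c2 * (INR k * (INR k - 1)).

Lemma poisson_quad mu c0 c1 c2 :
  is_series (fun k => poisson_pmf mu k * quad c0 c1 c2 k) (c0 + c1 * mu + c2 * (mu * mu)).
Proof.
  pose proof (is_series_scal c0 _ _ (poisson_total mu)) as H0.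
  pose proof (is_series_scal c1 _ _ (poisson_mean mu)) as H1.
  pose proof (is_series_scal c2 _ _ (poisson_factorial_moment2 mu)) as H2.
  pose proof (is_series_plus _ _ _ _ (is_series_plus _ _ _ _ H0 H1) H2) as H.
  unfold plus, scal in H; simpl in H; unfold mult in H; simpl in H.
  replace (c0 + c1 * mu + c2 * (mu * mu)) with (c0 * 1 + c1 * mu + c2 * (mu * mu)) by ring.
  eapply is_series_ext; [|exact H].
  intros k. unfold quad. simpl. ring.
Qed.

Lemma quad_fsum m (z0 z1 z2 : nat -> R) k :
  fsum m (fun l => quad (z0 l) (z1 l) (z2 l) k) = quad (fsum m z0) (fsum m z1) (fsum m z2) k.
Proof.
  induction m as [|m IH]; simpl fsum; [unfold quad; ring|].
  rewrite IH. unfold quad. ring.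
Qed.

Lemma sqrt_le_tangent Q q0 : 0 <= Q -> 0 < q0 -> sqrt Q <= sqrt q0 + (Q - q0) / (2 * sqrt q0).
Proof.
  intros HQ Hq.
  pose proof (sqrt_lt_R0 q0 Hq). pose proof (sqrt_sqrt Q HQ).
  pose proof (sqrt_sqrt q0 (Rlt_le _ _ Hq)). pose proof (sqrt_pos Q).
  apply Rmult_le_reg_l with (2 * sqrt q0); [lra|].
  replace (2 * sqrt q0 * (sqrt q0 + (Q - q0) / (2 * sqrt q0)))
    with (2 * (sqrt q0 * sqrt q0) + Q - q0) by (field; lra).
  pose proof (pow2_ge_0 (sqrt q0 - sqrt Q)). nra.
Qed.

Lemma sqrt_pred_le g t : 0 <= g -> 1 <= t -> 2 * g * sqrt (t - 1) <= 2 * g * sqrt t - g / t.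
Proof.
  intros Hg HS.
  pose proof (sqrt_sqrt t ltac:(lra)). pose proof (sqrt_sqrt (t - 1) ltac:(lra)).
  pose proof (sqrt_pos (t - 1)). pose proof (sqrt_pos t).
  set (p := sqrt t) in *. set (q := sqrt (t - 1)) in *.
  assert (1 <= p) by (unfold p; rewrite <- sqrt_1; apply sqrt_le_1_alt; lra).
  assert (q <= p) by (unfold p, q; apply sqrt_le_1_alt; lra).
  assert ((p - q) * (p + q) = 1) by nra.
  assert (1 / (2 * t) <= p - q).
  { apply Rmult_le_reg_l with (2 * t); [lra|]. field_simplify; nra. }
  replace (2 * g * p - g / t) with (2 * g * (p - 1 / (2 * t))) by (field; lra).
  apply Rmult_le_compat_l; lra.
Qed.

Lemma Rmax0_div y d : 0 < d -> Rmax 0 (y / d) = Rmax 0 y / d.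
Proof.
  intros Hd. unfold Rmax. destruct (Rle_dec 0 (y / d)) as [H1|H1], (Rle_dec 0 y) as [H2|H2];
    try (unfold Rdiv; ring).
  - exfalso. apply H2. apply Rmult_le_reg_r with (/ d); [apply Rinv_0_lt_compat; lra|]. lra.
  - exfalso. apply H1. apply Rle_mult_inv_pos; lra.
Qed.

Section LPSensitivity.
Variables (n m : nat) (lam r : nat -> R) (a : nat -> nat -> R).
Hypothesis Hr : forall j, (j < n)%nat -> 0 <= r j.
Hypothesis Ha : forall l j, (l < m)%nat -> (j < n)%nat -> 0 <= a l j.

Let ratio (d : nat -> R) l j := if Rlt_dec 0 (a l j) then d l / a l j else 0.

Lemma ratio_nonneg d l j : 0 <= d l -> 0 <= ratio d l j.
Proof. intros Hd. unfold ratio. destruct Rlt_dec; [apply Rle_mult_inv_pos|]; lra. Qed.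

(* Cutting x_j by d_l / a_lj for every resource l frees at least d_l units of resource l. *)
Definition lp_shrink (d xs : nat -> R) (j : nat) : R :=
  Rmax 0 (xs j - fsum m (fun l => ratio d l j)).

(* An upper bound on the optimal dual price of resource l. *)
Definition price_bound (l : nat) : R :=
  fsum n (fun j => if Rlt_dec 0 (a l j) then r j / a l j else 0).

Lemma price_bound_nonneg l : 0 <= price_bound l.
Proof.
  apply fsum_nonneg. intros j Hj. destruct Rlt_dec; [apply Rle_mult_inv_pos; auto|lra].
Qed.

Lemma lp_feas_shrink b0 b xs :
  lp_feas n m lam a b0 xs -> (forall l, (l < m)%nat -> 0 <= b l) ->
  lp_feas n m lam a b (lp_shrink (fun l => Rmax 0 (b0 l - b l)) xs).
Proof.
  intros [Hbox Hcap] Hb.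
  set (d := fun l => Rmax 0 (b0 l - b l)). set (y := lp_shrink d xs).
  assert (Hd : forall l, 0 <= d l) by (intros; apply Rmax_l).
  assert (Hy0 : forall j, 0 <= y j) by (intros; apply Rmax_l).
  assert (Hyx : forall j, (j < n)%nat -> y j <= xs j).
  { intros j Hj. destruct (Hbox j Hj).
    assert (0 <= fsum m (fun l => ratio d l j))
      by (apply fsum_nonneg; intros; apply ratio_nonneg, Hd).
    apply Rmax_lub; lra. }
  split; [intros j Hj; specialize (Hyx j Hj); destruct (Hbox j Hj); split; auto; lra|].
  intros l Hl.
  destruct (classic (exists j, (j < n)%nat /\ 0 < a l j /\ 0 < y j))
    as [[j [Hj [Halj Hyj]]]|Hnone].
  - assert (Hdl : d l <= a l j * (xs j - y j)).
    { assert (Eyj : y j = xs j - fsum m (fun l => ratio d l j)).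
      { unfold y, lp_shrink, Rmax in *. destruct Rle_dec; lra. }
      assert (d l / a l j <= fsum m (fun l => ratio d l j)).
      { replace (d l / a l j) with (ratio d l j) by (unfold ratio; destruct Rlt_dec; lra).
        apply (fsum_ge_term m (fun l => ratio d l j)); auto. intros; apply ratio_nonneg, Hd. }
      rewrite Eyj. apply Rmult_le_reg_l with (/ a l j); [apply Rinv_0_lt_compat; lra|].
      rewrite <- Rmult_assoc, Rinv_l, Rmult_1_l by lra. unfold Rdiv in *. lra. }
    assert (a l j * (xs j - y j) <= fsum n (fun j => a l j * (xs j - y j))).
    { apply (fsum_ge_term n (fun j => a l j * (xs j - y j))); auto.
      intros i Hi. apply Rmult_le_pos; [apply Ha; auto|specialize (Hyx i Hi); lra]. }
    assert (fsum n (fun j => a l j * y j)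
            = fsum n (fun j => a l j * xs j) - fsum n (fun j => a l j * (xs j - y j))).
    { rewrite <- fsum_sub. apply fsum_ext. intros; ring. }
    specialize (Hcap l Hl). assert (b0 l - b l <= d l) by apply Rmax_r. lra.
  - apply Rle_trans with (fsum n (fun _ => 0)).
    + apply fsum_le. intros j Hj.
      destruct (Rlt_dec 0 (a l j)) as [Halj|Halj].
      * assert (y j = 0) as ->; [|lra].
        apply Rle_antisym; [apply Rnot_lt_le; intros Hyj; apply Hnone; eauto|apply Hy0].
      * assert (a l j = 0) as -> by (specialize (Ha l j Hl Hj); lra). lra.
    + rewrite fsum_const. specialize (Hb l Hl). lra.
Qed.

Lemma lp_shrink_value d xs :
  fsum n (fun j => r j * xs j) - fsum m (fun l => price_bound l * d l)
  <= fsum n (fun j => r j * lp_shrink d xs j).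
Proof.
  apply Rle_trans with (fsum n (fun j => r j * xs j - fsum m (fun l => r j * ratio d l j))).
  - rewrite fsum_sub, fsum_swap. right. f_equal. apply fsum_ext. intros l _.
    unfold price_bound. rewrite Rmult_comm, <- fsum_scal. apply fsum_ext. intros j _.
    unfold ratio. destruct Rlt_dec; [field; lra|ring].
  - apply fsum_le. intros j Hj. rewrite fsum_scal, <- Rmult_minus_distr_l.
    apply Rmult_le_compat_l; [auto|apply Rmax_r].
Qed.

Lemma lp_opt_value_ge b0 b xs x :
  lp_feas n m lam a b0 xs -> lp_opt n m lam r a b x -> (forall l, (l < m)%nat -> 0 <= b l) ->
  fsum n (fun j => r j * xs j) - fsum m (fun l => price_bound l * Rmax 0 (b0 l - b l))
  <= fsum n (fun j => r j * x j).
Proof.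
  intros Hxs [_ Hopt] Hb.
  eapply Rle_trans; [apply lp_shrink_value|].
  apply Hopt, lp_feas_shrink; assumption.
Qed.

End LPSensitivity.

Section OneArrival.
Variables (n m : nat) (lam r : nat -> R) (a : nat -> nat -> R) (x : nat -> R).

(* [step f c] is the expectation of f at the capacity left after the next arrival of a
   period whose acceptance probabilities are x_j / lam_j. *)
Definition step (f : (nat -> R) -> R) (c : nat -> R) : R :=
  fsum n (fun j => lam j / fsum n lam *
    (if fitsb m a j c then x j / lam j * f (consume a j c) + (1 - x j / lam j) * f c
     else f c)).

Fixpoint steps (i : nat) (f : (nat -> R) -> R) (c : nat -> R) : R :=
  match i with O => f c | S i' => step (steps i' f) c end.

Definition arrival_reward (c : nat -> R) : R :=
  fsum n (fun j => lam j / fsum n lam * (if fitsb m a j c then x j / lam j * r j else 0)).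

Lemma period_rev_S k cont c :
  period_rev n m lam r a (S k) x cont c
  = arrival_reward c + step (period_rev n m lam r a k x cont) c.
Proof.
  simpl. unfold arrival_reward, step. rewrite <- fsum_add. apply fsum_ext. intros j _.
  destruct fitsb; ring.
Qed.

Lemma step_ext f g c : (forall c, f c = g c) -> step f c = step g c.
Proof. intros H. unfold step. apply fsum_ext. intros j _. rewrite !H. reflexivity. Qed.

Lemma step_add f g c : step (fun c => f c + g c) c = step f c + step g c.
Proof. unfold step. rewrite <- fsum_add. apply fsum_ext. intros j _. destruct fitsb; ring. Qed.

Lemma step_scal k f c : step (fun c => k * f c) c = k * step f c.
Proof. unfold step. rewrite <- fsum_scal. apply fsum_ext. intros j _. destruct fitsb; ring. Qed.

Lemma step_const k c : step (fun _ => k) c = k * fsum n (fun j => lam j / fsum n lam).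
Proof. unfold step. rewrite <- fsum_scal. apply fsum_ext. intros j _. destruct fitsb; ring. Qed.

Lemma step_fsum N (F : nat -> (nat -> R) -> R) c :
  step (fun c => fsum N (fun q => F q c)) c = fsum N (fun q => step (F q) c).
Proof.
  induction N as [|N IH]; simpl.
  - rewrite step_const. ring.
  - rewrite step_add, IH. reflexivity.
Qed.

Lemma steps_ext i f g c : (forall c, f c = g c) -> steps i f c = steps i g c.
Proof. revert c. induction i; simpl; intros c H; auto. apply step_ext. auto. Qed.

Lemma steps_add i f g c : steps i (fun c => f c + g c) c = steps i f c + steps i g c.
Proof.
  revert c. induction i; simpl; intros c; auto.
  rewrite <- step_add. apply step_ext. auto.
Qed.

Lemma steps_scal i k f c : steps i (fun c => k * f c) c = k * steps i f c.
Proof.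
  revert c. induction i; simpl; intros c; auto.
  rewrite <- step_scal. apply step_ext. auto.
Qed.

Lemma steps_fsum i N (F : nat -> (nat -> R) -> R) c :
  steps i (fun c => fsum N (fun q => F q c)) c = fsum N (fun q => steps i (F q) c).
Proof.
  revert c. induction i; simpl; intros c; auto.
  rewrite <- step_fsum. apply step_ext. auto.
Qed.

Lemma period_rev_steps k cont c :
  period_rev n m lam r a k x cont c
  = fsum k (fun i => steps i arrival_reward c) + steps k cont c.
Proof.
  revert c. induction k as [|k IH]; intros c; [simpl; ring|].
  rewrite period_rev_S, (step_ext _ _ _ IH), step_add, step_fsum, fsum_shift.
  simpl steps. rewrite Rplus_assoc. reflexivity.
Qed.

Hypothesis Hlam : forall j, (j < n)%nat -> 0 < lam j.
Hypothesis Hx : forall j, (j < n)%nat -> 0 <= x j <= lam j.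
Hypothesis Ha : forall l j, (l < m)%nat -> (j < n)%nat -> 0 <= a l j.

Lemma lam_le_total j : (j < n)%nat -> lam j <= fsum n lam.
Proof. intros Hj. apply fsum_ge_term; auto. intros; apply Rlt_le; auto. Qed.

Lemma class_prob_bounds j : (j < n)%nat -> 0 <= lam j / fsum n lam <= 1.
Proof.
  intros Hj. pose proof (Hlam j Hj). pose proof (lam_le_total j Hj).
  split; [apply Rle_mult_inv_pos; lra|].
  apply Rmult_le_reg_r with (fsum n lam); [lra|]. field_simplify; lra.
Qed.

Lemma accept_prob_bounds j : (j < n)%nat -> 0 <= x j / lam j <= 1.
Proof.
  intros Hj. pose proof (Hlam j Hj). destruct (Hx j Hj).
  split; [apply Rle_mult_inv_pos; lra|].
  apply Rmult_le_reg_r with (lam j); [lra|]. field_simplify; lra.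
Qed.

Lemma total_rate_pos : (0 < n)%nat -> 0 < fsum n lam.
Proof.
  intros Hn. apply Rlt_le_trans with (lam O); [apply Hlam|apply lam_le_total]; lia.
Qed.

Lemma class_prob_sum_1 : (0 < n)%nat -> fsum n (fun j => lam j / fsum n lam) = 1.
Proof.
  intros Hn. pose proof (total_rate_pos Hn).
  rewrite (fsum_ext n _ (fun j => / fsum n lam * lam j)) by (intros; unfold Rdiv; ring).
  rewrite fsum_scal. field. lra.
Qed.

Lemma class_prob_sum : 0 <= fsum n (fun j => lam j / fsum n lam) <= 1.
Proof.
  destruct (Nat.eq_dec n 0) as [->|Hn]; [simpl; lra|].
  rewrite class_prob_sum_1 by lia. lra.
Qed.

Definition nonneg_vec (c : nat -> R) : Prop := forall l, (l < m)%nat -> 0 <= c l.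

Definition col_sum (l : nat) : R := fsum n (fun j => a l j).

(* A box containing every capacity reachable from c by at most i acceptances. *)
Definition reach (i : nat) (c c' : nat -> R) : Prop :=
  forall l, (l < m)%nat -> 0 <= c' l /\ c' l <= c l /\ c l - c' l <= INR i * col_sum l.

Lemma col_sum_ge l j : (l < m)%nat -> (j < n)%nat -> a l j <= col_sum l.
Proof. intros Hl Hj. apply fsum_ge_term; auto. Qed.

Lemma reach_refl c : nonneg_vec c -> reach 0 c c.
Proof. intros Hc l Hl. simpl. specialize (Hc l Hl). lra. Qed.

Lemma reach_S i c c' : reach i c c' -> reach (S i) c c'.
Proof.
  intros H l Hl. destruct (H l Hl) as [? [? ?]]. rewrite S_INR.
  assert (0 <= col_sum l) by (apply fsum_nonneg; auto). lra.
Qed.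

Lemma reach_consume i j c c' : (j < n)%nat -> reach i (consume a j c) c' -> reach (S i) c c'.
Proof.
  intros Hj H l Hl. destruct (H l Hl) as [? [? ?]]. unfold consume in *. rewrite S_INR.
  pose proof (Ha l j Hl Hj). pose proof (col_sum_ge l j Hl Hj). lra.
Qed.

Lemma consume_nonneg j c : fitsb m a j c = true -> nonneg_vec (consume a j c).
Proof. intros Hf l Hl. unfold consume. pose proof (fitsb_le _ _ _ _ Hf l Hl). lra. Qed.

Lemma step_mono f g c :
  f c <= g c ->
  (forall j, (j < n)%nat -> fitsb m a j c = true -> f (consume a j c) <= g (consume a j c)) ->
  step f c <= step g c.
Proof.
  intros H1 H2. unfold step. apply fsum_le. intros j Hj.
  apply Rmult_le_compat_l; [apply class_prob_bounds; auto|].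
  destruct (accept_prob_bounds j Hj). destruct (fitsb m a j c) eqn:Ef; auto.
  specialize (H2 j Hj Ef). apply Rplus_le_compat; apply Rmult_le_compat_l; lra.
Qed.

Lemma steps_mono i f g c :
  nonneg_vec c -> (forall c', reach i c c' -> f c' <= g c') -> steps i f c <= steps i g c.
Proof.
  revert c. induction i as [|i IH]; simpl; intros c Hc H.
  - apply H, reach_refl, Hc.
  - apply step_mono.
    + apply IH; auto. intros; apply H, reach_S; auto.
    + intros j Hj Hf. apply IH; [apply consume_nonneg; auto|].
      intros c' Hr. apply H. eapply reach_consume; eauto.
Qed.

Lemma steps_mono_all i f g c : (forall c, f c <= g c) -> steps i f c <= steps i g c.
Proof. revert c. induction i; simpl; intros c H; auto. apply step_mono; auto. Qed.

Lemma steps_const_le i k c : 0 <= k -> steps i (fun _ => k) c <= k.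
Proof.
  intros Hk. revert c. induction i as [|i IH]; simpl; intros c; [lra|].
  eapply Rle_trans; [apply step_mono; [apply IH|intros; apply IH]|].
  rewrite step_const. pose proof class_prob_sum. nra.
Qed.

Lemma steps_zero i c : steps i (fun _ => 0) c = 0.
Proof.
  revert c. induction i as [|i IH]; simpl; intros c; auto.
  rewrite (step_ext _ (fun _ => 0)) by auto. rewrite step_const. ring.
Qed.

Lemma steps_nonneg i f c :
  nonneg_vec c -> (forall c', nonneg_vec c' -> 0 <= f c') -> 0 <= steps i f c.
Proof.
  intros Hc H. rewrite <- (steps_zero i c). apply steps_mono; auto.
  intros c' Hr. apply H. intros l Hl. apply (Hr l Hl).
Qed.

Hypothesis Hr : forall j, (j < n)%nat -> 0 <= r j.

Lemma arrival_reward_bounds c : 0 <= arrival_reward c <= fsum n r.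
Proof.
  unfold arrival_reward. split.
  - apply fsum_nonneg. intros j Hj. destruct (class_prob_bounds j Hj), (accept_prob_bounds j Hj).
    pose proof (Hr j Hj). destruct fitsb; [|lra]. apply Rmult_le_pos; [|apply Rmult_le_pos]; lra.
  - apply fsum_le. intros j Hj. destruct (class_prob_bounds j Hj), (accept_prob_bounds j Hj).
    pose proof (Hr j Hj). destruct fitsb; [|lra].
    assert (x j / lam j * r j <= r j) by nra. nra.
Qed.

Lemma period_rev_bounds k cont c B :
  nonneg_vec c -> 0 <= B -> (forall c', nonneg_vec c' -> 0 <= cont c' <= B) ->
  0 <= period_rev n m lam r a k x cont c <= INR k * fsum n r + B.
Proof.
  intros Hc HB Hcont. rewrite period_rev_steps. split.
  - apply Rplus_le_le_0_compat.
    + apply fsum_nonneg. intros. apply steps_nonneg; auto. intros; apply arrival_reward_bounds.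
    + apply steps_nonneg; auto. intros; apply Hcont; auto.
  - apply Rplus_le_compat.
    + rewrite <- fsum_const. apply fsum_le. intros i _.
      eapply Rle_trans; [apply steps_mono_all; intros; apply arrival_reward_bounds|].
      apply steps_const_le. pose proof (arrival_reward_bounds c). lra.
    + eapply Rle_trans; [|apply (steps_const_le k B c HB)].
      apply steps_mono; auto. intros c' Hr'. apply Hcont. intros l Hl; apply (Hr' l Hl).
Qed.

Hypothesis Hn : (0 < n)%nat.

(* Expected decrease, per arrival, of a function that drops by d_j whenever a class-j
   customer is accepted. *)
Definition expected_use (d : nat -> R) : R := fsum n (fun j => x j / fsum n lam * d j).

Lemma step_affine_ge (L : (nat -> R) -> R) d c :
  (forall j c, (j < n)%nat -> L (consume a j c) = L c - d j) ->
  (forall j, (j < n)%nat -> 0 <= d j) ->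
  L c - expected_use d <= step L c.
Proof.
  intros HL Hd. pose proof (total_rate_pos Hn).
  replace (L c - expected_use d)
    with (fsum n (fun j => lam j / fsum n lam * (L c - x j / lam j * d j))).
  2: { rewrite (fsum_ext n _ (fun j => L c * (lam j / fsum n lam) - x j / fsum n lam * d j))
         by (intros j Hj; pose proof (Hlam j Hj); field; lra).
       rewrite fsum_sub, fsum_scal, class_prob_sum_1 by exact Hn.
       unfold expected_use. ring. }
  unfold step. apply fsum_le. intros j Hj.
  apply Rmult_le_compat_l; [apply class_prob_bounds; auto|].
  destruct (accept_prob_bounds j Hj). pose proof (Hd j Hj).
  assert (0 <= x j / lam j * d j) by (apply Rmult_le_pos; lra).
  destruct fitsb; [rewrite HL by auto|]; lra.
Qed.

Lemma steps_affine_ge (L : (nat -> R) -> R) d i c :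
  (forall j c, (j < n)%nat -> L (consume a j c) = L c - d j) ->
  (forall j, (j < n)%nat -> 0 <= d j) ->
  L c - INR i * expected_use d <= steps i L c.
Proof.
  intros HL Hd. revert c. induction i as [|i IH]; intros c; [simpl; lra|].
  simpl steps. rewrite S_INR.
  apply Rle_trans with (step (fun c => L c - INR i * expected_use d) c).
  - replace (L c - (INR i + 1) * expected_use d)
      with (L c - INR i * expected_use d - expected_use d) by ring.
    apply (step_affine_ge (fun c => L c - INR i * expected_use d) d c); auto.
    intros j c' Hj. rewrite HL by auto. ring.
  - apply step_mono; [apply IH|intros; apply IH].
Qed.

Lemma steps_affine_le (L : (nat -> R) -> R) d i c :
  (forall j c, (j < n)%nat -> L (consume a j c) = L c + d j) ->
  (forall j, (j < n)%nat -> 0 <= d j) ->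
  steps i L c <= L c + INR i * expected_use d.
Proof.
  intros HL Hd.
  pose proof (steps_affine_ge (fun c => - L c) d i c) as H.
  rewrite (steps_ext i (fun c => - L c) (fun c => -1 * L c)), steps_scal in H by (intros; ring).
  enough (- L c - INR i * expected_use d <= -1 * steps i L c) by lra.
  apply H; auto. intros j c' Hj. rewrite HL by auto. ring.
Qed.

Lemma steps_const i k c : steps i (fun _ => k) c = k.
Proof.
  revert c. induction i as [|i IH]; simpl; intros c; auto.
  rewrite (step_ext _ (fun _ => k)), step_const, class_prob_sum_1 by auto. ring.
Qed.

Lemma steps_const_sub i k f c : steps i (fun c => k - f c) c = k - steps i f c.
Proof.
  rewrite (steps_ext i _ (fun c => k + -1 * f c)) by (intros; ring).
  rewrite steps_add, steps_const, steps_scal. ring.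
Qed.

Definition load (l : nat) : R := fsum n (fun j => a l j * x j).

Lemma load_nonneg l : (l < m)%nat -> 0 <= load l.
Proof.
  intros Hl. apply fsum_nonneg. intros j Hj. apply Rmult_le_pos; [apply Ha|apply Hx]; auto.
Qed.

Definition resource_potential (b beta : R) (l : nat) (s : R) (c : nat -> R) : R :=
  sqrt (Rmax 0 (s * b - c l) ^ 2 + beta * s).

Section PeriodStart.
Variables (c0 : nat -> R) (Sr : R).
Hypothesis Hc0 : nonneg_vec c0.
Hypothesis HS : 1 <= Sr.
Hypothesis Hload : forall l, (l < m)%nat -> load l <= c0 l / Sr.

(* Class j is small when 2 a_lj <= c0_l for all l.  Only small classes are credited in
   [reward_minorant]: they are blocked only after a depletion comparable to c0. *)
Definition small (j : nat) : bool := fitsb m (fun l j => 2 * a l j) j c0.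

Lemma small_le j l : small j = true -> (l < m)%nat -> 2 * a l j <= c0 l.
Proof. intros Hs Hl. exact (fitsb_le _ _ _ _ Hs l Hl). Qed.

Lemma not_small j : small j = false -> exists l, (l < m)%nat /\ 0 < a l j /\ c0 l < 2 * a l j.
Proof.
  intros Hs. destruct (fitsb_false _ _ _ _ Hs) as [l [Hl Hlt]].
  exists l. specialize (Hc0 l Hl). repeat split; auto; lra.
Qed.

Definition blocked_weight (j l : nat) : R := if Rlt_dec 0 (a l j) then / (c0 l - a l j) else 0.

Definition small_rate (j : nat) : R := if small j then x j * r j / fsum n lam else 0.

Definition reward_minorant (c : nat -> R) : R :=
  fsum n (fun j => small_rate j * (1 - fsum m (fun l => blocked_weight j l * (c0 l - c l)))).

Lemma blocked_weight_nonneg j l : (l < m)%nat -> small j = true -> 0 <= blocked_weight j l.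
Proof.
  intros Hl Hs. unfold blocked_weight. destruct Rlt_dec as [Hal|]; [|lra].
  pose proof (small_le j l Hs Hl). apply Rlt_le, Rinv_0_lt_compat. lra.
Qed.

Lemma small_rate_nonneg j : (j < n)%nat -> 0 <= small_rate j.
Proof.
  intros Hj. unfold small_rate. destruct small; [|lra].
  apply Rle_mult_inv_pos; [apply Rmult_le_pos; [apply Hx|apply Hr]; auto|apply total_rate_pos, Hn].
Qed.

(* If j does not fit at c then c_l < a_lj for some l, and then the l-th penalty
   term alone is at least 1. *)
Lemma reward_minorant_le c :
  (forall l, (l < m)%nat -> 0 <= c l <= c0 l) -> reward_minorant c <= arrival_reward c.
Proof.
  intros Hc. unfold reward_minorant, arrival_reward. apply fsum_le. intros j Hj.
  pose proof (total_rate_pos Hn). pose proof (Hlam j Hj).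
  replace (lam j / fsum n lam * (if fitsb m a j c then x j / lam j * r j else 0))
    with (if fitsb m a j c then x j * r j / fsum n lam else 0) by (destruct fitsb; field; lra).
  assert (0 <= x j * r j / fsum n lam)
    by (apply Rle_mult_inv_pos; [apply Rmult_le_pos; [apply Hx|apply Hr]|]; auto).
  unfold small_rate. destruct (small j) eqn:Hs; [|destruct fitsb; lra].
  assert (0 <= fsum m (fun l => blocked_weight j l * (c0 l - c l))).
  { apply fsum_nonneg. intros l Hl. specialize (Hc l Hl).
    apply Rmult_le_pos; [apply blocked_weight_nonneg|]; auto; lra. }
  destruct (fitsb m a j c) eqn:Hfit; [nra|].
  destruct (fitsb_false _ _ _ _ Hfit) as [l [Hl Hcl]].
  destruct (Hc l Hl). pose proof (small_le j l Hs Hl).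
  assert (1 <= blocked_weight j l * (c0 l - c l)).
  { unfold blocked_weight. destruct Rlt_dec; [|lra].
    apply Rmult_le_reg_l with (c0 l - a l j); [lra|]. field_simplify; lra. }
  assert (blocked_weight j l * (c0 l - c l) <= fsum m (fun l => blocked_weight j l * (c0 l - c l))).
  { apply (fsum_ge_term m (fun l => blocked_weight j l * (c0 l - c l))); auto.
    intros i Hi. specialize (Hc i Hi).
    apply Rmult_le_pos; [apply blocked_weight_nonneg|]; auto; lra. }
  nra.
Qed.

Definition minorant_use (i : nat) : R :=
  fsum n (fun j => small_rate j * fsum m (fun l => blocked_weight j l * a l i)).

Lemma reward_minorant_consume i c :
  reward_minorant (consume a i c) = reward_minorant c - minorant_use i.
Proof.
  unfold reward_minorant, minorant_use. rewrite <- fsum_sub. apply fsum_ext. intros j _.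
  unfold consume.
  rewrite (fsum_ext m _ (fun l => blocked_weight j l * (c0 l - c l) + blocked_weight j l * a l i))
    by (intros; ring).
  rewrite fsum_add. ring.
Qed.

Lemma minorant_use_nonneg i : (i < n)%nat -> 0 <= minorant_use i.
Proof.
  intros Hi. apply fsum_nonneg. intros j Hj. pose proof (small_rate_nonneg j Hj).
  unfold small_rate in *. destruct (small j) eqn:Hs; [|lra].
  apply Rmult_le_pos; [assumption|]. apply fsum_nonneg. intros l Hl.
  apply Rmult_le_pos; [apply blocked_weight_nonneg|apply Ha]; auto.
Qed.

Lemma expected_rewards_ge k :
  quad 0 (fsum n small_rate) (- expected_use minorant_use / 2) k
  <= fsum k (fun i => steps i arrival_reward c0).
Proof.
  set (D := expected_use minorant_use).
  apply Rle_trans with (fsum k (fun i => reward_minorant c0 - INR i * D)).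
  - rewrite fsum_sub, fsum_const, (fsum_ext k _ (fun i => D * INR i)) by (intros; ring).
    rewrite fsum_scal, fsum_id. unfold quad.
    replace (reward_minorant c0) with (fsum n small_rate).
    + right. field.
    + unfold reward_minorant. apply fsum_ext. intros j _.
      rewrite (fsum_ext m _ (fun _ => 0)) by (intros; ring). rewrite fsum_const. ring.
  - apply fsum_le. intros i _.
    eapply Rle_trans; [apply (steps_affine_ge reward_minorant minorant_use)|].
    + intros j c _. apply reward_minorant_consume.
    + intros j Hj. apply minorant_use_nonneg, Hj.
    + apply steps_mono; auto. intros c Hc. apply reward_minorant_le.
      intros l Hl. destruct (Hc l Hl) as [? [? ?]]. lra.
Qed.

Lemma scaled_load_le l : (l < m)%nat -> Sr * load l <= c0 l.
Proof.
  intros Hl. pose proof (Hload l Hl).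
  apply Rmult_le_reg_l with (/ Sr); [apply Rinv_0_lt_compat; lra|].
  rewrite <- Rmult_assoc, Rinv_l, Rmult_1_l by lra. unfold Rdiv in *; lra.
Qed.

Lemma blocked_weight_load j l :
  (l < m)%nat -> small j = true -> blocked_weight j l * load l <= 2 / Sr.
Proof.
  intros Hl Hs. pose proof (load_nonneg l Hl). pose proof (Hload l Hl).
  unfold blocked_weight.
  destruct Rlt_dec as [Hal|]; [|rewrite Rmult_0_l; apply Rle_mult_inv_pos; lra].
  pose proof (small_le j l Hs Hl). pose proof (scaled_load_le l Hl).
  apply Rmult_le_reg_l with (c0 l - a l j); [lra|]. field_simplify; try lra.
  apply Rmult_le_reg_l with Sr; [lra|]. field_simplify; lra.
Qed.

Lemma total_rate_expected_use :
  fsum n lam * expected_use minorant_use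
  = fsum n (fun j => small_rate j * fsum m (fun l => blocked_weight j l * load l)).
Proof.
  pose proof (total_rate_pos Hn). unfold expected_use, minorant_use.
  rewrite <- fsum_scal.
  rewrite (fsum_ext n _ (fun i => fsum n (fun j => fsum m (fun l =>
             small_rate j * blocked_weight j l * (a l i * x i)))))
    by (intros i _; rewrite <- !fsum_scal; apply fsum_ext; intros j _;
        rewrite <- !fsum_scal; apply fsum_ext; intros; field; lra).
  rewrite fsum_swap. apply fsum_ext. intros j _.
  rewrite fsum_swap, <- fsum_scal. apply fsum_ext. intros l _.
  unfold load. rewrite <- !fsum_scal. apply fsum_ext. intros; ring.
Qed.

Definition blocking_loss : R := fsum n (fun j => (2 + INR m * lam j) * r j).

Lemma small_class_blocking_le j :
  (j < n)%nat -> small j = true ->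
  x j * r j * fsum m (fun l => blocked_weight j l * load l) / 2 <= (2 + INR m * lam j) * r j / Sr.
Proof.
  intros Hj Hs. pose proof (Hr j Hj). destruct (Hx j Hj). pose proof (pos_INR m).
  assert (fsum m (fun l => blocked_weight j l * load l) <= INR m * (2 / Sr)).
  { rewrite <- fsum_const. apply fsum_le. intros l Hl. apply blocked_weight_load; auto. }
  assert (0 <= fsum m (fun l => blocked_weight j l * load l)).
  { apply fsum_nonneg. intros l Hl.
    apply Rmult_le_pos; [apply blocked_weight_nonneg|apply load_nonneg]; auto. }
  assert (x j * r j * fsum m (fun l => blocked_weight j l * load l)
          <= lam j * r j * (INR m * (2 / Sr))) by (apply Rmult_le_compat; nra).
  assert (0 <= 2 * r j / Sr) by (apply Rle_mult_inv_pos; lra).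
  unfold Rdiv in *. nra.
Qed.

Lemma large_class_rate_le j : (j < n)%nat -> small j = false -> x j * Sr <= 2.
Proof.
  intros Hj Hs. destruct (not_small j Hs) as [l [Hl [Hal Hcl]]]. destruct (Hx j Hj).
  assert (a l j * x j <= load l).
  { apply (fsum_ge_term n (fun j => a l j * x j)); auto.
    intros i Hi. apply Rmult_le_pos; [apply Ha|apply Hx]; auto. }
  pose proof (scaled_load_le l Hl).
  apply Rmult_le_reg_l with (a l j); [lra|].
  assert (a l j * x j * Sr <= load l * Sr) by (apply Rmult_le_compat_r; lra). nra.
Qed.

(* Small classes are blocked with probability O(1/Sr); the others have x_j <= 2/Sr. *)
Lemma mean_rewards_ge :
  fsum n (fun j => r j * x j) - blocking_loss / Sr
  <= 0 + fsum n small_rate * fsum n lam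
     + - expected_use minorant_use / 2 * (fsum n lam * fsum n lam).
Proof.
  pose proof (total_rate_pos Hn).
  replace (0 + fsum n small_rate * fsum n lam
           + - expected_use minorant_use / 2 * (fsum n lam * fsum n lam))
    with (fsum n (fun j => fsum n lam * small_rate j
            - fsum n lam / 2 * (small_rate j * fsum m (fun l => blocked_weight j l * load l))))
    by (rewrite fsum_sub, !fsum_scal, <- total_rate_expected_use; field).
  replace (fsum n (fun j => r j * x j) - blocking_loss / Sr)
    with (fsum n (fun j => r j * x j - (2 + INR m * lam j) * r j / Sr))
    by (unfold blocking_loss; rewrite fsum_sub; f_equal;
        rewrite (fsum_ext n _ (fun j => / Sr * ((2 + INR m * lam j) * r j)))
          by (intros; unfold Rdiv; ring);
        rewrite fsum_scal; unfold Rdiv; ring).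
  apply fsum_le. intros j Hj. pose proof (Hr j Hj). pose proof (pos_INR m).
  unfold small_rate. destruct (small j) eqn:Hs.
  - pose proof (small_class_blocking_le j Hj Hs).
    replace (fsum n lam * (x j * r j / fsum n lam)) with (x j * r j) by (field; lra).
    replace (fsum n lam / 2
             * (x j * r j / fsum n lam * fsum m (fun l => blocked_weight j l * load l)))
      with (x j * r j * fsum m (fun l => blocked_weight j l * load l) / 2) by (field; lra).
    lra.
  - pose proof (large_class_rate_le j Hj Hs). pose proof (Hlam j Hj).
    assert (r j * x j <= (2 + INR m * lam j) * r j / Sr).
    { apply Rmult_le_reg_r with Sr; [lra|].
      replace ((2 + INR m * lam j) * r j / Sr * Sr) with ((2 + INR m * lam j) * r j)
        by (field; lra).
      assert (0 <= r j * (INR m * lam j)) by (apply Rmult_le_pos; nra).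
      assert (r j * (x j * Sr) <= r j * 2) by (apply Rmult_le_compat_l; auto). nra. }
    rewrite Rmult_0_r, Rmult_0_l. lra.
Qed.

Section Resource.
Variables (l : nat) (b beta : R).
Hypothesis Hl : (l < m)%nat.
Hypothesis Hbeta : 0 < beta.

Let u := Rmax 0 (Sr * b - c0 l).
Let q := u ^ 2 + beta * Sr.
Let rho := 1 - 1 / Sr.

(* Bounding sqrt by its tangent at q and following the expected drift of c_l over k arrivals
   gives the quadratic tangent0 + tangent1 k + tangent2 k(k-1) of [steps_resource_potential_le]. *)
Definition tangent0 : R :=
  sqrt q + (rho ^ 2 * u ^ 2 - 2 * rho * u * load l + load l ^ 2 + beta * (Sr - 1) - q)
           / (2 * sqrt q).
Definition tangent1 : R := (2 * rho * u * load l / fsum n lam + col_sum l ^ 2) / (2 * sqrt q).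
Definition tangent2 : R := col_sum l ^ 2 / (2 * sqrt q).

Lemma rho_bounds : 0 <= rho <= 1.
Proof.
  assert (0 < 1 / Sr) by (apply Rdiv_lt_0_compat; lra).
  assert (1 / Sr <= 1) by (apply Rmult_le_reg_l with Sr; [|field_simplify]; lra).
  unfold rho. lra.
Qed.

(* The shortfall at the end of the period is that at its start, shrunk by the factor rho,
   plus the capacity consumed in excess of the planned load. *)
Lemma end_shortfall_sq_le k c :
  reach k c0 c ->
  Rmax 0 ((Sr - 1) * b - c l) ^ 2
  <= rho ^ 2 * u ^ 2 + 2 * rho * u * (c0 l - c l - load l) + (INR k * col_sum l) ^ 2 + load l ^ 2.
Proof.
  intros Hreach. destruct (Hreach l Hl) as [H1 [H2 H3]].
  assert (0 <= u) by apply Rmax_l. assert (Sr * b - c0 l <= u) by apply Rmax_r.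
  pose proof rho_bounds. pose proof (load_nonneg l Hl). pose proof (Hload l Hl).
  set (Z := rho * u + (c0 l - c l) - load l).
  assert ((Sr - 1) * b - c l <= Z).
  { replace ((Sr - 1) * b - c l) with (rho * (Sr * b - c0 l) - c0 l / Sr + (c0 l - c l))
      by (unfold rho; field; lra).
    assert (rho * (Sr * b - c0 l) <= rho * u) by (apply Rmult_le_compat_l; lra).
    unfold Z. lra. }
  assert (Rmax 0 ((Sr - 1) * b - c l) ^ 2 <= Z ^ 2).
  { unfold Rmax. destruct Rle_dec; [nra|]. simpl. nra. }
  assert (0 <= INR k * col_sum l) by lra.
  assert ((c0 l - c l) ^ 2 <= (INR k * col_sum l) ^ 2) by (apply pow_incr; lra).
  assert (0 <= (c0 l - c l) * load l) by (apply Rmult_le_pos; lra).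
  unfold Z in *. nra.
Qed.

Lemma steps_resource_potential_le k :
  steps k (resource_potential b beta l (Sr - 1)) c0 <= quad tangent0 tangent1 tangent2 k.
Proof.
  assert (Hu : 0 <= u) by apply Rmax_l.
  assert (Hq : 0 < q) by (unfold q; nra).
  pose proof (sqrt_lt_R0 q Hq). pose proof rho_bounds. pose proof (total_rate_pos Hn).
  set (g := rho * u / sqrt q).
  set (A := sqrt q + (rho ^ 2 * u ^ 2 + 2 * rho * u * (c0 l - load l) + (INR k * col_sum l) ^ 2
                      + load l ^ 2 + beta * (Sr - 1) - q) / (2 * sqrt q)).
  assert (Hg : 0 <= g) by (unfold g; apply Rle_mult_inv_pos; [apply Rmult_le_pos|]; lra).
  apply Rle_trans with (steps k (fun c => A - g * c l) c0).
  - apply steps_mono; auto. intros c Hreach.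
    eapply Rle_trans; [apply (sqrt_le_tangent _ q); [|exact Hq]|].
    + apply Rplus_le_le_0_compat; [apply pow2_ge_0|apply Rmult_le_pos; lra].
    + pose proof (end_shortfall_sq_le k c Hreach).
      replace (A - g * c l)
        with (sqrt q + (rho ^ 2 * u ^ 2 + 2 * rho * u * (c0 l - c l - load l)
                        + (INR k * col_sum l) ^ 2 + load l ^ 2 + beta * (Sr - 1) - q)
                       / (2 * sqrt q))
        by (unfold A, g; field; lra).
      apply Rplus_le_compat_l. unfold Rdiv.
      apply Rmult_le_compat_r; [apply Rlt_le, Rinv_0_lt_compat; lra|].
      lra.
  - eapply Rle_trans; [apply (steps_affine_le _ (fun j => g * a l j))|].
    + intros j c _. unfold consume. ring.
    + intros j Hj. apply Rmult_le_pos; auto.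
    + assert (expected_use (fun j => g * a l j) = g * load l / fsum n lam) as ->.
      { unfold expected_use, load.
        rewrite (fsum_ext n (fun j => x j / fsum n lam * (g * a l j))
                   (fun j => g / fsum n lam * (a l j * x j))) by (intros; field; lra).
        rewrite fsum_scal. unfold Rdiv. ring. }
      right. unfold quad, tangent0, tangent1, tangent2, A, g. field. split; lra.
Qed.

(* beta exceeds the second moment of the excess consumption, so the expected value of
   the tangent bound falls below the current potential by a margin proportional to u. *)
Lemma resource_potential_drift :
  (fsum n lam + fsum n lam * fsum n lam) * col_sum l ^ 2 + load l ^ 2 + 1 <= beta ->
  (2 + beta) * (tangent0 + tangent1 * fsum n lam + tangent2 * (fsum n lam * fsum n lam))
  <= (2 + beta) * resource_potential b beta l Sr c0 - u / Sr.
Proof.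
  intros Hbig. pose proof (total_rate_pos Hn).
  assert (Hu : 0 <= u) by apply Rmax_l.
  assert (Hq : 0 < q) by (unfold q; nra).
  pose proof (sqrt_lt_R0 q Hq). pose proof (sqrt_sqrt q (Rlt_le _ _ Hq)).
  change (resource_potential b beta l Sr c0) with (sqrt q).
  set (W := (fsum n lam + fsum n lam * fsum n lam) * col_sum l ^ 2 + load l ^ 2).
  assert (HW : W + 1 <= beta) by exact Hbig.
  replace (tangent0 + tangent1 * fsum n lam + tangent2 * (fsum n lam * fsum n lam))
    with (sqrt q + (rho ^ 2 * u ^ 2 + W + beta * (Sr - 1) - q) / (2 * sqrt q))
    by (unfold tangent0, tangent1, tangent2, W; field; lra).
  assert (HN : rho ^ 2 * u ^ 2 + W + beta * (Sr - 1) - q <= - (u ^ 2 + Sr) / Sr).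
  { replace (rho ^ 2 * u ^ 2 + W + beta * (Sr - 1) - q)
      with ((1 / (Sr * Sr) - 2 / Sr) * u ^ 2 + (W - beta)) by (unfold rho, q; field; lra).
    replace (- (u ^ 2 + Sr) / Sr) with (- (1 / Sr) * u ^ 2 - 1) by (field; lra).
    assert (1 / (Sr * Sr) <= 1 / Sr)
      by (apply Rmult_le_reg_l with (Sr * Sr); [nra|field_simplify; nra]).
    assert ((1 / (Sr * Sr) - 2 / Sr) * u ^ 2 <= - (1 / Sr) * u ^ 2)
      by (apply Rmult_le_compat_r; [apply pow2_ge_0|lra]).
    lra. }
  assert (Hkey : 2 * u * sqrt q <= (2 + beta) * (u ^ 2 + Sr)).
  { pose proof (pow2_ge_0 (u - sqrt q)). unfold q in *. nra. }
  enough ((2 + beta) * ((- (u ^ 2 + Sr) / Sr) / (2 * sqrt q)) <= - (u / Sr)).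
  { assert ((rho ^ 2 * u ^ 2 + W + beta * (Sr - 1) - q) / (2 * sqrt q)
            <= (- (u ^ 2 + Sr) / Sr) / (2 * sqrt q))
      by (unfold Rdiv; apply Rmult_le_compat_r; [apply Rlt_le, Rinv_0_lt_compat|]; lra).
    nra. }
  replace ((2 + beta) * ((- (u ^ 2 + Sr) / Sr) / (2 * sqrt q)))
    with (- ((2 + beta) * (u ^ 2 + Sr) / (2 * sqrt q * Sr))) by (field; lra).
  apply Ropp_le_contravar.
  apply Rmult_le_reg_r with (2 * sqrt q * Sr); [nra|].
  replace ((2 + beta) * (u ^ 2 + Sr) / (2 * sqrt q * Sr) * (2 * sqrt q * Sr))
    with ((2 + beta) * (u ^ 2 + Sr)) by (field; lra).
  replace (u / Sr * (2 * sqrt q * Sr)) with (2 * u * sqrt q) by (field; lra).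
  exact Hkey.
Qed.

End Resource.

Section AllResources.
Variables (b beta M : nat -> R).
Hypothesis Hbeta : forall l, (l < m)%nat -> 0 < beta l.
Hypothesis HM : forall l, (l < m)%nat -> 0 <= M l.

Lemma steps_potential_le A k :
  quad (A - fsum m (fun l => M l * tangent0 l (b l) (beta l)))
       (- fsum m (fun l => M l * tangent1 l (b l) (beta l)))
       (- fsum m (fun l => M l * tangent2 l (b l) (beta l))) k
  <= steps k (fun c => A - fsum m (fun l => M l * resource_potential (b l) (beta l) l (Sr - 1) c))
       c0.
Proof.
  rewrite steps_const_sub, steps_fsum.
  rewrite (fsum_ext m (fun l => steps k _ c0)
             (fun l => M l * steps k (resource_potential (b l) (beta l) l (Sr - 1)) c0))
    by (intros; apply steps_scal).
  enough (fsum m (fun l => M l * steps k (resource_potential (b l) (beta l) l (Sr - 1)) c0)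
          <= quad (fsum m (fun l => M l * tangent0 l (b l) (beta l)))
                  (fsum m (fun l => M l * tangent1 l (b l) (beta l)))
                  (fsum m (fun l => M l * tangent2 l (b l) (beta l))) k) by (unfold quad in *; lra).
  rewrite <- quad_fsum. apply fsum_le. intros l Hl.
  replace (quad (M l * tangent0 l (b l) (beta l)) (M l * tangent1 l (b l) (beta l))
                (M l * tangent2 l (b l) (beta l)) k)
    with (M l * quad (tangent0 l (b l) (beta l)) (tangent1 l (b l) (beta l))
                     (tangent2 l (b l) (beta l)) k) by (unfold quad; ring).
  apply Rmult_le_compat_l; [auto|]. apply steps_resource_potential_le; auto.
Qed.

Lemma period_rev_ge_quad cont A k :
  (forall c, nonneg_vec c ->
     A - fsum m (fun l => M l * resource_potential (b l) (beta l) l (Sr - 1) c) <= cont c) ->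
  quad (A - fsum m (fun l => M l * tangent0 l (b l) (beta l)))
       (fsum n small_rate - fsum m (fun l => M l * tangent1 l (b l) (beta l)))
       (- expected_use minorant_use / 2 - fsum m (fun l => M l * tangent2 l (b l) (beta l))) k
  <= period_rev n m lam r a k x cont c0.
Proof.
  intros Hcont. rewrite period_rev_steps.
  pose proof (expected_rewards_ge k). pose proof (steps_potential_le A k).
  assert (steps k (fun c =>
            A - fsum m (fun l => M l * resource_potential (b l) (beta l) l (Sr - 1) c)) c0
          <= steps k cont c0).
  { apply steps_mono; [exact Hc0|]. intros c Hc. apply Hcont. intros l Hl. apply (Hc l Hl). }
  unfold quad in *. lra.
Qed.

Lemma period_rev_mean_ge A K :
  (forall l, (l < m)%nat -> 0 <= K l) ->
  (forall l, (l < m)%nat -> M l = (2 + beta l) * K l) ->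
  (forall l, (l < m)%nat ->
     (fsum n lam + fsum n lam * fsum n lam) * col_sum l ^ 2 + load l ^ 2 + 1 <= beta l) ->
  A + fsum n (fun j => r j * x j) - blocking_loss / Sr
    - fsum m (fun l => M l * resource_potential (b l) (beta l) l Sr c0
                       - K l * Rmax 0 (Sr * b l - c0 l) / Sr)
  <= (A - fsum m (fun l => M l * tangent0 l (b l) (beta l)))
     + (fsum n small_rate - fsum m (fun l => M l * tangent1 l (b l) (beta l))) * fsum n lam
     + (- expected_use minorant_use / 2 - fsum m (fun l => M l * tangent2 l (b l) (beta l)))
       * (fsum n lam * fsum n lam).
Proof.
  intros HK HMK Hbig. pose proof mean_rewards_ge as Hrew.
  set (Lam := fsum n lam) in *.
  assert (Hdrift : fsum m (fun l => M l * (tangent0 l (b l) (beta l)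
                                             + tangent1 l (b l) (beta l) * Lam
                                             + tangent2 l (b l) (beta l) * (Lam * Lam)))
          <= fsum m (fun l => M l * resource_potential (b l) (beta l) l Sr c0
                              - K l * Rmax 0 (Sr * b l - c0 l) / Sr)).
  { apply fsum_le. intros l Hl. rewrite HMK by exact Hl.
    pose proof (resource_potential_drift l (b l) (beta l) (Hbeta l Hl) (Hbig l Hl)).
    pose proof (HK l Hl).
    replace (K l * Rmax 0 (Sr * b l - c0 l) / Sr) with (K l * (Rmax 0 (Sr * b l - c0 l) / Sr))
      by (unfold Rdiv; ring).
    rewrite (Rmult_comm (2 + beta l) (K l)), !Rmult_assoc, <- Rmult_minus_distr_l.
    apply Rmult_le_compat_l; assumption. }
  rewrite (fsum_ext m (fun l => M l * (_ + _ + _))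
             (fun l => M l * tangent0 l (b l) (beta l) + Lam * (M l * tangent1 l (b l) (beta l))
                       + (Lam * Lam) * (M l * tangent2 l (b l) (beta l)))) in Hdrift
    by (intros; ring).
  rewrite !fsum_add, !fsum_scal in Hdrift. lra.
Qed.

End AllResources.
End PeriodStart.
End OneArrival.

Definition beta_res (n : nat) (lam : nat -> R) (a : nat -> nat -> R) (l : nat) : R :=
  (fsum n lam + fsum n lam * fsum n lam) * col_sum n a l ^ 2
  + fsum n (fun j => a l j * lam j) ^ 2 + 1.

Definition weight (n : nat) (lam r : nat -> R) (a : nat -> nat -> R) (l : nat) : R :=
  (2 + beta_res n lam a l) * price_bound n r a l.

(* The right-hand side of the induction in the header, with g = blocking_loss,
   M_l = weight l, beta_l = beta_res l and K_l = price_bound l. *)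
Definition fr_potential (n m : nat) (lam r : nat -> R) (a : nat -> nat -> R)
  (b : nat -> R) (s : R) (c : nat -> R) : R :=
  2 * blocking_loss n m lam r * sqrt s
  + fsum m (fun l => weight n lam r a l * resource_potential (b l) (beta_res n lam a l) l s c).

Definition gap_constant (n m : nat) (lam r : nat -> R) (a : nat -> nat -> R) : R :=
  2 * blocking_loss n m lam r + fsum m (fun l => weight n lam r a l * sqrt (beta_res n lam a l)).

Section Constants.
Variables (n m : nat) (lam r : nat -> R) (a : nat -> nat -> R).
Hypothesis Hlam : forall j, (j < n)%nat -> 0 < lam j.
Hypothesis Hr : forall j, (j < n)%nat -> 0 <= r j.
Hypothesis Ha : forall l j, (l < m)%nat -> (j < n)%nat -> 0 <= a l j.

Lemma total_rate_nonneg : 0 <= fsum n lam.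
Proof. apply fsum_nonneg. intros; apply Rlt_le; auto. Qed.

Lemma beta_res_ge_1 l : 1 <= beta_res n lam a l.
Proof.
  unfold beta_res. pose proof total_rate_nonneg.
  assert (0 <= (fsum n lam + fsum n lam * fsum n lam) * col_sum n a l ^ 2)
    by (apply Rmult_le_pos; [nra|apply pow2_ge_0]).
  pose proof (pow2_ge_0 (fsum n (fun j => a l j * lam j))). lra.
Qed.

Lemma beta_res_ge_load x :
  (forall j, (j < n)%nat -> 0 <= x j <= lam j) -> forall l, (l < m)%nat ->
  (fsum n lam + fsum n lam * fsum n lam) * col_sum n a l ^ 2 + load n a x l ^ 2 + 1
  <= beta_res n lam a l.
Proof.
  intros Hx l Hl. unfold beta_res. apply Rplus_le_compat_r, Rplus_le_compat_l.
  assert (load n a x l <= fsum n (fun j => a l j * lam j))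
    by (apply fsum_le; intros j Hj; apply Rmult_le_compat_l; [apply Ha|apply Hx]; auto).
  pose proof (load_nonneg n m lam a x Hx Ha l Hl). apply pow_incr. lra.
Qed.

Lemma weight_nonneg l : 0 <= weight n lam r a l.
Proof.
  unfold weight. pose proof (beta_res_ge_1 l).
  apply Rmult_le_pos; [lra|apply price_bound_nonneg; auto].
Qed.

Lemma blocking_loss_nonneg : 0 <= blocking_loss n m lam r.
Proof.
  apply fsum_nonneg. intros j Hj. pose proof (pos_INR m). pose proof (Hlam j Hj).
  apply Rmult_le_pos; [nra|auto].
Qed.

Lemma gap_constant_nonneg : 0 <= gap_constant n m lam r a.
Proof.
  unfold gap_constant. pose proof blocking_loss_nonneg.
  apply Rplus_le_le_0_compat; [lra|]. apply fsum_nonneg. intros l _.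
  apply Rmult_le_pos; [apply weight_nonneg|apply sqrt_pos]; auto.
Qed.

Lemma fr_potential_nonneg b s c : 0 <= fr_potential n m lam r a b s c.
Proof.
  unfold fr_potential. pose proof blocking_loss_nonneg. pose proof (sqrt_pos s).
  apply Rplus_le_le_0_compat; [nra|]. apply fsum_nonneg. intros l _.
  apply Rmult_le_pos; [apply weight_nonneg|apply sqrt_pos].
Qed.

Lemma fr_potential_start T C :
  (1 <= T)%nat ->
  fr_potential n m lam r a (fun l => C l / INR T) (INR T) C
  = gap_constant n m lam r a * sqrt (INR T).
Proof.
  intros HT. assert (0 < INR T) by (apply lt_0_INR; lia).
  unfold fr_potential, gap_constant.
  rewrite Rmult_plus_distr_r, (Rmult_comm (fsum m _)), <- fsum_scal.
  f_equal. apply fsum_ext. intros l _. unfold resource_potential.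
  replace (Rmax 0 (INR T * (C l / INR T) - C l) ^ 2 + beta_res n lam a l * INR T)
    with (beta_res n lam a l * INR T)
    by (replace (INR T * (C l / INR T) - C l) with 0 by (field; lra);
        rewrite Rmax_left by lra; ring).
  pose proof (beta_res_ge_1 l).
  rewrite sqrt_mult_alt by lra. ring.
Qed.

End Constants.

Section FrequentResolving.
Variables (n m : nat) (lam r : nat -> R) (a : nat -> nat -> R) (T : nat)
  (sel : nat -> (nat -> R) -> (nat -> R)).
Hypothesis Hlam : forall j, (j < n)%nat -> 0 < lam j.
Hypothesis Hr : forall j, (j < n)%nat -> 0 <= r j.
Hypothesis Ha : forall l j, (l < m)%nat -> (j < n)%nat -> 0 <= a l j.
Hypothesis Hsel : FR_selection n m lam r a T sel.

Local Notation V := (FR_rem n m lam r a T sel).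
Local Notation x s c := (sel (T - S s)%nat c).

Lemma sel_opt s c :
  (S s <= T)%nat -> nonneg_vec m c -> lp_opt n m lam r a (fun l => c l / INR (S s)) (x s c).
Proof.
  intros Hs Hc. pose proof (Hsel (T - S s)%nat c ltac:(lia) Hc) as H.
  replace (T - (T - S s))%nat with (S s) in H by lia. exact H.
Qed.

Lemma sel_bounds s c :
  (S s <= T)%nat -> nonneg_vec m c -> forall j, (j < n)%nat -> 0 <= x s c j <= lam j.
Proof. intros Hs Hc. apply (sel_opt s c Hs Hc). Qed.

Lemma period_rev_ex_series s c cont B :
  (S s <= T)%nat -> nonneg_vec m c -> 0 <= B -> (forall c', nonneg_vec m c' -> 0 <= cont c' <= B) ->
  ex_series (fun k => poisson_pmf (fsum n lam) k * period_rev n m lam r a k (x s c) cont c).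
Proof.
  intros Hs Hc HB Hcont. pose proof (total_rate_nonneg n lam Hlam) as HLam.
  apply (@ex_series_le R_AbsRing R_CompleteNormedModule _
           (fun k => poisson_pmf (fsum n lam) k * quad B (fsum n r) 0 k));
    [|eexists; apply poisson_quad].
  intros k. pose proof (poisson_pmf_nonneg _ k HLam).
  destruct (period_rev_bounds n m lam r a (x s c) Hlam (sel_bounds s c Hs Hc) Ha Hr
              k cont c B Hc HB Hcont).
  unfold norm; simpl; unfold abs; simpl.
  rewrite Rabs_pos_eq by (apply Rmult_le_pos; auto).
  apply Rmult_le_compat_l; [auto|]. unfold quad. lra.
Qed.

Lemma FR_rem_bounds s c :
  (s <= T)%nat -> nonneg_vec m c -> 0 <= V s c <= INR s * (fsum n lam * fsum n r).
Proof.
  pose proof (total_rate_nonneg n lam Hlam). assert (0 <= fsum n r) by (apply fsum_nonneg; auto).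
  revert c. induction s as [|s IH]; intros c Hs Hc; [simpl; lra|].
  set (B := INR s * (fsum n lam * fsum n r)).
  assert (HB : 0 <= B) by (unfold B; pose proof (pos_INR s); apply Rmult_le_pos; nra).
  assert (Hcont : forall c', nonneg_vec m c' -> 0 <= V s c' <= B) by (intros; apply IH; auto; lia).
  pose proof (period_rev_ex_series s c (V s) B Hs Hc HB Hcont) as Hex.
  pose proof (fun k => period_rev_bounds n m lam r a (x s c) Hlam (sel_bounds s c Hs Hc)
                         Ha Hr k (V s) c B Hc HB Hcont) as Hk.
  change (V (S s) c) with
    (Series (fun k => poisson_pmf (fsum n lam) k * period_rev n m lam r a k (x s c) (V s) c)).
  split.
  - apply Rle_trans with (0 + 0 * fsum n lam + 0 * (fsum n lam * fsum n lam)); [right; ring|].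
    apply (Series_ge_is_series (fun k => poisson_pmf (fsum n lam) k * quad 0 0 0 k)); auto;
      [apply poisson_quad|].
    intros k. destruct (Hk k). apply Rmult_le_compat_l; [apply poisson_pmf_nonneg; auto|].
    unfold quad. lra.
  - eapply Rle_trans;
      [apply (Series_le_is_series _ _ _ Hex (poisson_quad (fsum n lam) B (fsum n r) 0))|].
    + intros k. destruct (Hk k). apply Rmult_le_compat_l; [apply poisson_pmf_nonneg; auto|].
      unfold quad. lra.
    + unfold B. rewrite S_INR. right; ring.
Qed.

Lemma FR_period_ex_series s c :
  (S s <= T)%nat -> nonneg_vec m c ->
  ex_series (fun k => poisson_pmf (fsum n lam) k * period_rev n m lam r a k (x s c) (V s) c).
Proof.
  intros Hs Hc. apply (period_rev_ex_series s c (V s) (INR s * (fsum n lam * fsum n r)) Hs Hc).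
  - pose proof (pos_INR s). pose proof (total_rate_nonneg n lam Hlam).
    assert (0 <= fsum n r) by (apply fsum_nonneg; auto). apply Rmult_le_pos; nra.
  - intros c' Hc'. apply FR_rem_bounds; auto; lia.
Qed.

Hypothesis Hn : (0 < n)%nat.
Variables (b0 xstar : nat -> R).
Hypothesis Hxstar : lp_feas n m lam a b0 xstar.

Local Notation Rstar := (fsum n (fun j => r j * xstar j)).
Local Notation potential := (fr_potential n m lam r a b0).

Lemma sel_value_ge s c :
  (S s <= T)%nat -> nonneg_vec m c ->
  Rstar - fsum m (fun l => price_bound n r a l * Rmax 0 (INR (S s) * b0 l - c l) / INR (S s))
  <= fsum n (fun j => r j * x s c j).
Proof.
  intros Hs Hc. assert (0 < INR (S s)) by apply lt_0_INR, Nat.lt_0_succ.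
  rewrite (fsum_ext m _ (fun l => price_bound n r a l * Rmax 0 (b0 l - c l / INR (S s)))).
  - apply (lp_opt_value_ge n m lam r a Hr Ha b0 _ xstar _ Hxstar (sel_opt s c Hs Hc)).
    intros l Hl. apply Rle_mult_inv_pos; [apply Hc, Hl|lra].
  - intros l _. replace (b0 l - c l / INR (S s)) with ((INR (S s) * b0 l - c l) / INR (S s))
      by (field; lra).
    rewrite Rmax0_div by lra. unfold Rdiv. ring.
Qed.

Lemma FR_rem_step s c :
  (S s <= T)%nat -> nonneg_vec m c ->
  (forall c', nonneg_vec m c' -> INR s * Rstar - potential (INR s) c' <= V s c') ->
  INR (S s) * Rstar - potential (INR (S s)) c <= V (S s) c.
Proof.
  intros Hs Hc IH. pose proof (sel_bounds s c Hs Hc) as Hx.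
  set (Sr := INR (S s)).
  assert (HS : 1 <= Sr) by (unfold Sr; rewrite S_INR; pose proof (pos_INR s); lra).
  assert (Hs1 : INR s = Sr - 1) by (unfold Sr; rewrite S_INR; ring).
  assert (Hload : forall l, (l < m)%nat -> load n a (x s c) l <= c l / Sr)
    by apply (sel_opt s c Hs Hc).
  assert (Hbeta : forall l, (l < m)%nat -> 0 < beta_res n lam a l)
    by (intros l _; pose proof (beta_res_ge_1 n lam a Hlam l); lra).
  set (A := INR s * Rstar - 2 * blocking_loss n m lam r * sqrt (INR s)).
  assert (Hcont : forall c', nonneg_vec m c' ->
            A - fsum m (fun l => weight n lam r a l
                  * resource_potential (b0 l) (beta_res n lam a l) l (Sr - 1) c') <= V s c').
  { intros c' Hc'. rewrite <- Hs1. apply Rle_trans with (2 := IH c' Hc').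
    unfold A, fr_potential. lra. }
  pose proof (period_rev_mean_ge n m lam r a (x s c) Hlam Hx Ha Hr Hn c Sr Hc HS Hload
                b0 (beta_res n lam a) (weight n lam r a) Hbeta A (price_bound n r a)
                (fun l _ => price_bound_nonneg n r a Hr l) (fun l _ => eq_refl)
                (beta_res_ge_load n m lam a Ha (x s c) Hx)) as Hmean.
  pose proof (sel_value_ge s c Hs Hc) as Hlp. fold Sr in Hlp.
  pose proof (sqrt_pred_le _ Sr (blocking_loss_nonneg n m lam r Hlam Hr) HS) as Hsqrt.
  change (V (S s) c)
    with (Series (fun k => poisson_pmf (fsum n lam) k * period_rev n m lam r a k (x s c) (V s) c)).
  eapply Rle_trans.
  2: { eapply Series_ge_is_series;
         [apply (FR_period_ex_series s c Hs Hc)|apply (poisson_quad (fsum n lam))|].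
       intros k. apply Rmult_le_compat_l; [apply poisson_pmf_nonneg, total_rate_nonneg, Hlam|].
       apply (period_rev_ge_quad n m lam r a (x s c) Hlam Hx Ha Hr Hn c Sr Hc HS Hload
                b0 (beta_res n lam a) (weight n lam r a) Hbeta
                (fun l _ => weight_nonneg n lam r a Hlam Hr l) (V s) A k Hcont). }
  assert (Sr * Rstar = INR s * Rstar + Rstar) by (rewrite Hs1; ring).
  rewrite <- Hs1 in Hsqrt. rewrite fsum_sub in Hmean. unfold fr_potential. unfold A in *. lra.
Qed.

Lemma FR_rem_ge s c :
  (s <= T)%nat -> nonneg_vec m c -> INR s * Rstar - potential (INR s) c <= V s c.
Proof.
  revert c. induction s as [|s IH]; intros c Hs Hc.
  - pose proof (fr_potential_nonneg n m lam r a Hlam Hr b0 0 c). simpl INR; simpl FR_rem. lra.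
  - apply FR_rem_step; auto. intros c' Hc'. apply IH; auto; lia.
Qed.

End FrequentResolving.

Theorem proposition3 :
  forall (n m : nat) (lam r : nat -> R) (a : nat -> nat -> R),
    (forall j, (j < n)%nat -> 0 < lam j) ->
    (forall j, (j < n)%nat -> 0 <= r j) ->
    (forall l j, (l < m)%nat -> (j < n)%nat -> 0 <= a l j) ->
    exists (M : R) (T1 : nat),
      forall (T : nat) (C : nat -> R) (sel : nat -> (nat -> R) -> (nat -> R))
             (xstar : nat -> R),
        (1 <= T)%nat -> (T1 <= T)%nat ->
        (forall l, (l < m)%nat -> 0 <= C l) ->
        FR_selection n m lam r a T sel ->
        lp_opt n m lam r a (fun l => C l / INR T) xstar ->
        INR T * fsum n (fun j => r j * xstar j) - v_FR n m lam r a T sel C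
          <= M * sqrt (INR T).
Proof.
  intros n m lam r a Hlam Hr Ha.
  exists (gap_constant n m lam r a), 1%nat.
  intros T C sel xstar HT _ HC Hsel [Hxstar _].
  unfold v_FR.
  destruct (Nat.eq_dec n 0) as [->|Hn].
  - pose proof (FR_rem_bounds 0 m lam r a T sel Hlam Hr Ha Hsel T C (le_n T) HC).
    pose proof (gap_constant_nonneg 0 m lam r a Hlam Hr). pose proof (sqrt_pos (INR T)).
    simpl fsum. nra.
  - pose proof (FR_rem_ge n m lam r a T sel Hlam Hr Ha Hsel ltac:(lia) _ _ Hxstar T C (le_n T) HC)
      as Hgap.
    rewrite fr_potential_start in Hgap by assumption. lra.
Qed.
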